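(* There exists a (necessarily discontinuous) map $f:[0,1]\to[0,1]$ such that the chain components poset $(\mathfrak{C}_f,\preceq)$ is order isomorphic to $([0,1]\cap\mathbb{Q},\le)$.
   Context: No regularity is assumed on maps. For a map $f:[0,1]\to[0,1]$ with the usual metric: an $\varepsilon$-chain from $x$ to $y$ is a finite sequence $x_0=x,\dots,x_n=y$, $n\ge1$, with $|f(x_i)-x_{i+1}|<\varepsilon$; $x\,\mathcal{C}\,y$ iff for every $\varepsilon>0$ there is an $\varepsilon$-chain from $x$ to $y$; $CR_f=\{x:x\,\mathcal{C}\,x\}$; $x\,E\,y$ iff $x\,\mathcal{C}\,y$ and $y\,\mathcal{C}\,x$; $\mathfrak{C}_f=CR_f/E$ is the set of chain components, partially ordered by $[x]\preceq[y]$ iff $y\,\mathcal{C}\,x$. *)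

From Stdlib Require Import Reals.
From mathcomp Require Import all_boot all_order all_algebra.

Local Open Scope R_scope.

Definition I01 (x : R) : Prop := 0 <= x <= 1.

Definition self_map01 (f : R -> R) : Prop := forall x, I01 x -> I01 (f x).

Definition eps_chain (f : R -> R) (eps x y : R) : Prop :=
  exists (n : nat) (s : nat -> R),
    (1 <= n)%nat /\ s 0%nat = x /\ s n = y /\
    (forall i, (i <= n)%nat -> I01 (s i)) /\
    (forall i, (i < n)%nat -> Rabs (f (s i) - s (S i)) < eps).

Definition chain_rel (f : R -> R) (x y : R) : Prop :=
  I01 x /\ I01 y /\ forall eps, 0 < eps -> eps_chain f eps x y.

Definition CR (f : R -> R) (x : R) : Prop := chain_rel f x x.

Definition chainE (f : R -> R) (x y : R) : Prop := chain_rel f x y /\ chain_rel f y x.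

(* The poset of chain components (CR_f / E, with [x] <= [y] iff y C x) is order
   isomorphic to ([0,1] ∩ Q, <=): there is g : CR_f -> [0,1] ∩ Q that is
   constant exactly on E-classes (so it induces a bijection on CR_f / E),
   onto [0,1] ∩ Q, and satisfies [x] <= [y] <-> g x <= g y. *)
Definition chain_components_iso_Q01 (f : R -> R) : Prop :=
  exists g : R -> rat,
    (forall x, CR f x -> (0 <= g x)%R /\ (g x <= 1)%R) /\
    (forall x y, CR f x -> CR f y -> (chainE f x y <-> g x = g y)) /\
    (forall q : rat, (0 <= q)%R -> (q <= 1)%R -> exists x, CR f x /\ g x = q) /\
    (forall x y, CR f x -> CR f y -> (chain_rel f y x <-> (g x <= g y)%R)).

(* Place the rationals in [0,1] by an order embedding [site] (a weighted count of the
   rationals below q along an enumeration of Q) under which every [site q] is isolated: no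
   other site lies within [radius q] of it. The sites of [0,1] ∩ Q are fixed points. In the
   gap below [site u] a sequence of jump points converges to [site u], and for each rational
   q in [0, u) infinitely many of them are sent to [site q]; every other point is sent to
   [site 0]. So an eps-chain can descend from [site u] to any lower site, while the region
   below [site b + radius b / 2] is mapped below [site b] and traps every chain entering it,
   so chains never climb. Similar traps show that no point other than a site is chain
   recurrent; hence the chain components are the sites, ordered like [0,1] ∩ Q. *)

From Stdlib Require Import Reals Lra ClassicalEpsilon.
From mathcomp Require Import all_boot all_order all_algebra.
From Coquelicot Require Import Coquelicot.

Import Order.TTheory.
Open Scope R_scope.

Lemma Series_ge0 (a : nat -> R) : (forall n, 0 <= a n) -> ex_series a -> 0 <= Series a.
Proof.
move=> a_ge0 ex_a.
have <- : Series (fun n => 0 * a n) = 0 by rewrite Series_scal_l; ring.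
by apply: Series_le => // n; have := a_ge0 n; lra.
Qed.

Lemma term_le_Series (a : nat -> R) n :
  (forall m, 0 <= a m) -> ex_series a -> a n <= Series a.
Proof.
elim: n a => [|n IHn] a a_ge0 ex_a; rewrite (Series_incr_1 a ex_a).
- have ex_tail := proj1 (ex_series_incr_1 a) ex_a.
  have := Series_ge0 _ (fun m => a_ge0 m.+1) ex_tail; lra.
- have := IHn _ (fun m => a_ge0 m.+1) (proj1 (ex_series_incr_1 a) ex_a).
  have := a_ge0 0%N; lra.
Qed.

Section GapEmbedding.

Context {d : Order.disp_t} {T : orderType d}.
Context {code : T -> nat} {decode : nat -> option T}.
Hypothesis codeK : pcancel code decode.

Definition weight (m : nat) : R := (1/2) ^ m.+1.

(* The element [r] coded by [m] contributes its full weight to [embed x] when [r < x]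
   and half of it when [r = x]; the half weight at [x] itself opens a gap on both sides
   of [embed x]. *)
Definition step (m : nat) (x : T) : R :=
  if decode m is Some r then
    ((if (r < x)%O then 1 else 0) + (if (r <= x)%O then 1 else 0)) / 2
  else 0.

Definition embed (x : T) : R := Series (fun m => weight m * step m x).

Definition gap (r : T) : R := weight (code r) / 2.

Lemma weight_gt0 m : 0 < weight m.
Proof. by apply: pow_lt; lra. Qed.

Lemma step_in01 m x : 0 <= step m x <= 1.
Proof.
rewrite /step; case: (decode m) => [r|]; last lra.
by case: (r < x)%O; case: (r <= x)%O; lra.
Qed.

Lemma step_le m x y : (x <= y)%O -> step m x <= step m y.
Proof.
move=> le_xy; rewrite /step; case: (decode m) => [r|]; last lra.
case lt_rx: (r < x)%O.
  by rewrite (lt_le_trans lt_rx le_xy) (ltW (lt_le_trans lt_rx le_xy)); case: (r <= x)%O; lra.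
case le_rx: (r <= x)%O; first by rewrite (le_trans le_rx le_xy); case: (r < y)%O; lra.
by case: (r < y)%O; case: (r <= y)%O; lra.
Qed.

Lemma step_code_lt r x : (x < r)%O -> step (code r) x = 0.
Proof. by move=> lt_xr; rewrite /step codeK (lt_gtF lt_xr) (lt_geF lt_xr); lra. Qed.

Lemma step_code_eq r : step (code r) r = 1/2.
Proof. by rewrite /step codeK ltxx lexx; lra. Qed.

Lemma step_code_gt r x : (r < x)%O -> step (code r) x = 1.
Proof. by move=> lt_rx; rewrite /step codeK lt_rx ltW //; lra. Qed.

Lemma ex_series_weight : ex_series weight.
Proof.
apply: (ex_series_ext (fun n => scal (1/2) ((1/2) ^ n))) => [n //|].
by apply/ex_series_scal_l/ex_series_geom; rewrite Rabs_pos_eq; lra.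
Qed.

Lemma Series_weight : Series weight = 1.
Proof.
rewrite (Series_ext _ (fun n => 1/2 * (1/2) ^ n)) // Series_scal_l.
rewrite (is_series_unique _ _ (is_series_geom (1/2) _)); first field.
by rewrite Rabs_pos_eq; lra.
Qed.

Lemma weighted_step_bound m x : 0 <= weight m * step m x <= weight m.
Proof. by have := weight_gt0 m; have := step_in01 m x; nra. Qed.

Lemma ex_series_embed x : ex_series (fun m => weight m * step m x).
Proof.
apply: (ex_series_le _ weight); last exact: ex_series_weight.
move=> m; rewrite /norm /= /abs /= Rabs_pos_eq; have := weighted_step_bound m x; lra.
Qed.

Lemma embed_in01 x : 0 <= embed x <= 1.
Proof.
split; first by apply: Series_ge0 (ex_series_embed x) => m; case: (weighted_step_bound m x).
by rewrite -Series_weight; apply: Series_le ex_series_weight => m; apply: weighted_step_bound.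
Qed.

Lemma gap_gt0 r : 0 < gap r.
Proof. by have := weight_gt0 (code r); rewrite /gap; lra. Qed.

Lemma embed_diff_ge x y m :
  (x <= y)%O -> weight m * (step m y - step m x) <= embed y - embed x.
Proof.
move=> le_xy; have ex_x := ex_series_embed x; have ex_y := ex_series_embed y.
rewrite /embed -Series_minus // Rmult_minus_distr_l.
apply: (term_le_Series (fun k => weight k * step k y - weight k * step k x)).
  by move=> k; have := weight_gt0 k; have := step_le k _ _ le_xy; nra.
exact: ex_series_minus.
Qed.

Lemma embed_gap_below s r : (s < r)%O -> embed s + gap r <= embed r.
Proof.
move=> lt_sr; have := embed_diff_ge _ _ (code r) (ltW lt_sr).
by rewrite step_code_eq step_code_lt // /gap; lra.
Qed.

Lemma embed_gap_above r s : (r < s)%O -> embed r + gap r <= embed s.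
Proof.
move=> lt_rs; have := embed_diff_ge _ _ (code r) (ltW lt_rs).
by rewrite step_code_eq step_code_gt // /gap; lra.
Qed.

Lemma embed_le x y : (x <= y)%O -> embed x <= embed y.
Proof.
rewrite le_eqVlt => /predU1P [-> | lt_xy]; first lra.
by have := embed_gap_below _ _ lt_xy; have := gap_gt0 y; lra.
Qed.

Lemma embed_inj : injective embed.
Proof.
move=> x y eq_xy; case: (ltgtP x y) => // [lt_xy | lt_yx].
- by have := embed_gap_below _ _ lt_xy; have := gap_gt0 y; lra.
- by have := embed_gap_below _ _ lt_yx; have := gap_gt0 x; lra.
Qed.

End GapEmbedding.

Lemma eps_chain_trap (f : R -> R) eps M x y :
  (forall z, z < M + eps -> f z <= M) -> f x <= M -> eps_chain f eps x y -> y < M + eps.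
Proof.
move=> trap fx_le [n [s [n_ge1 [s0 [sn [_ s_step]]]]]].
have fs_le i : (i <= n)%N -> f (s i) <= M.
  elim: i => [|i IHi] le_in; first by rewrite s0.
  have [_ ?] := Rabs_def2 _ _ (s_step i le_in).
  by apply: trap; have := IHi (ltnW le_in); lra.
case: n n_ge1 sn s_step fs_le => // n _ <- s_step fs_le.
have [_ ?] := Rabs_def2 _ _ (s_step n (ltnSn n)).
by have := fs_le n (leqnSn n); lra.
Qed.

Lemma eps_chain_lower (f : R -> R) eps m x y :
  (forall z, m <= f z) -> eps_chain f eps x y -> m - eps < y.
Proof.
move=> f_ge [n [s [n_ge1 [_ [sn [_ s_step]]]]]].
case: n n_ge1 sn s_step => // n _ <- s_step.
have [? _] := Rabs_def2 _ _ (s_step n (ltnSn n)).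
by have := f_ge (s n); lra.
Qed.

Lemma chain_rel_fixpoint (f : R -> R) x : I01 x -> f x = x -> chain_rel f x x.
Proof.
move=> x01 fx; do 2!split=> //; move=> eps eps_gt0.
exists 1%N, (fun=> x); do 4!split=> //.
by move=> i _; rewrite fx Rminus_diag Rabs_R0.
Qed.

Lemma injective_unbounded (h : nat -> nat) : injective h -> forall N, exists m, (N <= h m)%N.
Proof.
move=> inj_h N.
suff /hasP [m _ le_N] : has (fun m => N <= h m)%N (seq.iota 0%N N.+1) by exists m.
apply/negPn/negP; rewrite -all_predC => /allP small.
have sub : {subset map h (seq.iota 0%N N.+1) <= seq.iota 0%N N}.
  by move=> _ /mapP [m m_in ->]; rewrite mem_iota /= ltnNge; apply: small.
have := uniq_leq_size _ sub; rewrite (map_inj_uniq inj_h) iota_uniq => /(_ isT).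
by rewrite size_map !size_iota ltnn.
Qed.

Notation site := (@embed _ rat unpickle).
Notation radius := (@gap _ rat pickle).

Lemma site_in01 q : I01 (site q).
Proof. exact: embed_in01. Qed.

Lemma radius_gt0 u : 0 < radius u.
Proof. exact: gap_gt0. Qed.

Lemma site_gap_below {s r : rat} : (s < r)%R -> site s <= site r - radius r.
Proof. by move=> lt_sr; have := @embed_gap_below _ rat _ _ pickleK s r lt_sr; lra. Qed.

Lemma site_gap_above {r s : rat} : (r < s)%R -> site r + radius r <= site s.
Proof. exact: (@embed_gap_above _ rat _ _ pickleK). Qed.

Lemma site_le {s r : rat} : (s <= r)%R -> site s <= site r.
Proof. exact: (@embed_le _ rat _ _ pickleK). Qed.

Lemma site_inj : injective site.
Proof. exact: (@embed_inj _ rat _ _ pickleK). Qed.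

Definition jump (u : rat) (n : nat) : R := site u - radius u / (INR n + 3).

Lemma jump_gt u n : site u - radius u / 2 < jump u n.
Proof.
rewrite /jump; have := radius_gt0 u; have := pos_INR n => n_ge0 r_gt0.
apply: Rplus_lt_compat_l; apply: Ropp_lt_contravar.
by apply: Rmult_lt_compat_l => //; apply: Rinv_lt_contravar; nra.
Qed.

Lemma jump_lt u n : jump u n < site u.
Proof.
rewrite /jump; have := radius_gt0 u; have := pos_INR n => n_ge0 r_gt0.
suff : 0 < radius u / (INR n + 3) by lra.
by apply: Rdiv_lt_0_compat; lra.
Qed.

Lemma jump_close u eps :
  0 < eps -> exists N, forall n, (N <= n)%N -> site u - jump u n < eps.
Proof.
move=> eps_gt0; have [N N_gt] := INR_unbounded (radius u / eps).
exists N => n /ssrnat.leP /le_INR le_Nn; have := pos_INR n.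
have : radius u < INR n * eps.
  have -> : radius u = radius u / eps * eps by field; lra.
  by apply: Rmult_lt_compat_r; lra.
rewrite /jump => r_lt n_ge0.
have -> : site u - (site u - radius u / (INR n + 3)) = radius u / (INR n + 3) by ring.
by apply/Rlt_div_l; nra.
Qed.

Lemma site_neq_jump q u n : site q <> jump u n.
Proof.
move=> eq_site; have := jump_gt u n; have := jump_lt u n; rewrite -eq_site.
have := radius_gt0 u; case: (ltgtP q u) => [/site_gap_below | /site_gap_above | ->]; lra.
Qed.

Lemma jump_inj u n v k : jump u n = jump v k -> u = v /\ n = k.
Proof.
move=> eq_jump; have := jump_gt u n; have := jump_lt u n.
have := jump_gt v k; have := jump_lt v k; rewrite eq_jump.
have := radius_gt0 u; have := radius_gt0 v.
case: (ltgtP u v) => [/site_gap_below | /site_gap_below | eq_uv]; try by move=> *; exfalso; lra.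
subst v => _ r_gt0 _ _ _ _; split=> //; apply: INR_eq.
have ratio : radius u / (INR n + 3) = radius u / (INR k + 3).
  by move: eq_jump; rewrite /jump; lra.
have : / (INR n + 3) = / (INR k + 3) by apply: (Rmult_eq_reg_l (radius u)) => //; lra.
by move/Rinv_eq_reg; lra.
Qed.

(* Reading [n] as the code of a pair [(q, m)] makes every [q] in [[0, u)] the target of
   infinitely many jump points, hence of jump points arbitrarily close to [site u]. *)
Definition target (u : rat) (n : nat) : rat :=
  if @unpickle (rat * nat)%type n is Some (q, _) then
    (if (0 <= q < u)%R then q else 0%R)
  else 0%R.

Lemma target_ge0 u n : (0 <= target u n)%R.
Proof.
rewrite /target; case: unpickle => [[q _]|] //.
by case: ifP => // /andP [].
Qed.

Lemma target_lt u n : (0 < u)%R -> (target u n < u)%R.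
Proof.
move=> u_gt0; rewrite /target; case: unpickle => [[q _]|] //.
by case: ifP => // /andP [].
Qed.

Lemma target_pickle (u q : rat) (m : nat) : (0 <= q < u)%R -> target u (pickle (q, m)) = q.
Proof. by move=> q_lt; rewrite /target pickleK q_lt. Qed.

Definition label (x : R) : rat :=
  match excluded_middle_informative (exists q, (0 <= q <= 1)%R /\ x = site q) with
  | left on_site => proj1_sig (constructive_indefinite_description _ on_site)
  | right _ =>
    match excluded_middle_informative
            (exists k : (rat * nat)%type, (0 < k.1 <= 1)%R /\ x = jump k.1 k.2) with
    | left on_jump =>
      let k := proj1_sig (constructive_indefinite_description _ on_jump) in target k.1 k.2
    | right _ => 0%R
    end
  end.

Variant label_spec (x : R) : rat -> Prop :=
  | LabelSite q of (0 <= q <= 1)%R & x = site q : label_spec x q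
  | LabelJump u n of (0 < u <= 1)%R & x = jump u n : label_spec x (target u n)
  | LabelOther of (forall q, (0 <= q <= 1)%R -> x <> site q)
      & (forall u n, (0 < u <= 1)%R -> x <> jump u n) : label_spec x 0%R.

Lemma labelP x : label_spec x (label x).
Proof.
rewrite /label; case: excluded_middle_informative => [on_site | off_site].
  by case: constructive_indefinite_description => q [] /=; constructor.
case: excluded_middle_informative => [on_jump | off_jump].
  by case: constructive_indefinite_description => -[u n] [] /=; constructor.
by constructor=> [q q01 eq_x | u n u01 eq_x]; [apply: off_site | apply: off_jump];
  [exists q | exists (u, n)].
Qed.

Lemma label_site q : (0 <= q <= 1)%R -> label (site q) = q.
Proof.
move=> q01; case: labelP => [q' _ /site_inj // | u n _ /site_neq_jump // | off _].
by case: (off q q01).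
Qed.

Lemma label_jump u n : (0 < u <= 1)%R -> label (jump u n) = target u n.
Proof.
move=> u01; case: labelP => [q _ /esym /site_neq_jump // | v k _ /jump_inj [-> ->] // | _ off].
by case: (off u n u01).
Qed.

Lemma label_ge0 x : (0 <= label x)%R.
Proof. by case: labelP => [q /andP [] | u n _ _ | _ _]; rewrite ?target_ge0. Qed.

Definition qmap (x : R) : R := site (label x).

Lemma qmap_site q : (0 <= q <= 1)%R -> qmap (site q) = site q.
Proof. by move=> q01; rewrite /qmap label_site. Qed.

Lemma qmap_ge x : site 0%R <= qmap x.
Proof. exact/site_le/label_ge0. Qed.

Lemma label_le_below_site {b : rat} {y : R} :
  (0 <= b)%R -> y < site b + radius b / 2 -> (label y <= b)%R.
Proof.
move=> b_ge0; have := radius_gt0 b; case: labelP => [q _ | u n /andP [u_gt0 _] | _ _] //.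
- move=> -> r_gt0 y_lt; rewrite leNgt; apply/negP => /site_gap_above; lra.
- move=> -> r_gt0 y_lt; case: (leP u b) => [le_ub | lt_bu].
    exact: le_trans (ltW (target_lt u n u_gt0)) le_ub.
  have := jump_gt u n; have := site_gap_below lt_bu; have := site_gap_above lt_bu; lra.
Qed.

Lemma label_lt_below_jump {u : rat} {y : R} :
  (0 < u)%R -> y < site u - radius u / 2 -> (label y < u)%R.
Proof.
move=> u_gt0; have := radius_gt0 u; case: labelP => [q _ | v k /andP [v_gt0 _] | _ _] //.
- move=> -> r_gt0 y_lt; rewrite ltNge; apply/negP => /site_le; lra.
- move=> -> r_gt0 y_lt; case: (leP v u) => [le_vu | lt_uv].
    exact: lt_le_trans (target_lt v k v_gt0) le_vu.
  have := jump_gt v k; have := site_gap_below lt_uv; have := radius_gt0 v; lra.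
Qed.

Lemma chain_rel_site_le a b : (0 <= a <= 1)%R -> (0 <= b <= 1)%R ->
  chain_rel qmap (site b) (site a) -> (a <= b)%R.
Proof.
move=> a01 b01 [_ [_ chains]]; have r_gt0 := radius_gt0 b.
rewrite leNgt; apply/negP => /site_gap_above.
have : site a < site b + radius b / 2.
  apply: (eps_chain_trap qmap _ _ (site b)); last by apply: chains; lra.
    by move=> z /(label_le_below_site (proj1 (andP b01))) /site_le.
  by rewrite qmap_site //; lra.
lra.
Qed.

Lemma eps_chain_site_down (a b : rat) eps :
  (0 <= a)%R -> (a < b)%R -> (b <= 1)%R -> 0 < eps -> eps_chain qmap eps (site b) (site a).
Proof.
move=> a_ge0 lt_ab b_le1 eps_gt0.
have b_gt0 : (0 < b)%R := le_lt_trans a_ge0 lt_ab.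
have b01 : (0 <= b <= 1)%R by rewrite ltW.
have [N close] := jump_close b _ eps_gt0.
have inj_code : injective (fun m => pickle ((a, m) : rat * nat)%type).
  by move=> m1 m2 /(congr1 (@unpickle (rat * nat)%type)); rewrite !pickleK => -[].
have [m le_N] := injective_unbounded _ inj_code N.
set n := pickle _ in le_N.
have qmap_jump : qmap (jump b n) = site a.
  by rewrite /qmap label_jump ?b_gt0 // target_pickle // a_ge0.
have := close n le_N; have := jump_lt b n; have := jump_gt b n.
have := site_gap_below lt_ab; have := site_in01 a; have := site_in01 b.
rewrite /I01 => b_in a_in gap_ab jump_above jump_below jump_near.
exists 2%N, (fun i => match i with 0%N => site b | 1%N => jump b n | _ => site a end).
do 3!split=> //; split.
- by case=> [|[|i]] _ //=; split; lra.
- case=> [|[|i]] // _ /=; last by rewrite qmap_jump Rminus_diag Rabs_R0.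
  by rewrite qmap_site // Rabs_pos_eq; lra.
Qed.

Lemma chain_rel_site a b : (0 <= a <= 1)%R -> (0 <= b <= 1)%R ->
  chain_rel qmap (site b) (site a) <-> (a <= b)%R.
Proof.
move=> a01 b01; split; first exact: chain_rel_site_le.
rewrite le_eqVlt => /predU1P [-> | lt_ab].
  by apply: chain_rel_fixpoint; [apply: site_in01 | apply: qmap_site].
move: a01 b01 => /andP [a_ge0 _] /andP [_ b_le1].
split; first exact: site_in01.
split; first exact: site_in01.
by move=> eps; apply: eps_chain_site_down.
Qed.

Lemma jump_not_CR u n : (0 < u <= 1)%R -> ~ CR qmap (jump u n).
Proof.
move=> u01 [_ [_ chains]]; have [u_gt0 _] := andP u01; have r_gt0 := radius_gt0 u.
have : jump u n < site u - radius u + radius u / 2.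
  apply: (eps_chain_trap qmap _ _ (jump u n)); last by apply: chains; lra.
    move=> z z_lt; apply/site_gap_below/label_lt_below_jump => //; lra.
  by rewrite /qmap label_jump //; apply/site_gap_below/target_lt.
by have := jump_gt u n; lra.
Qed.

Lemma off_site_not_CR x : x <> site 0%R -> qmap x = site 0%R -> ~ CR qmap x.
Proof.
move=> x_neq qmap_x [_ [_ chains]]; have r_gt0 := radius_gt0 0%R.
case: (Rlt_le_dec x (site 0%R)) => [x_lt | x_ge].
  by have := eps_chain_lower qmap _ _ _ _ qmap_ge (chains (site 0%R - x) ltac:(lra)); lra.
have x_gt : site 0%R < x by lra.
pose eps := Rmin (radius 0%R / 2) (x - site 0%R).
have eps_gt0 : 0 < eps by apply: Rmin_glb_lt; lra.
have eps_le_r : eps <= radius 0%R / 2 := Rmin_l _ _.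
have eps_le_x : eps <= x - site 0%R := Rmin_r _ _.
have : x < site 0%R + eps.
  apply: (eps_chain_trap qmap _ _ x); last exact: chains.
    by move=> z z_lt; apply/site_le/label_le_below_site => //; lra.
  by rewrite qmap_x; lra.
lra.
Qed.

Lemma CR_qmapP x : CR qmap x <-> exists2 q, (0 <= q <= 1)%R & x = site q.
Proof.
split; last first.
  by move=> [q q01 ->]; apply: chain_rel_fixpoint; [apply: site_in01 | apply: qmap_site].
move: (erefl (qmap x)); rewrite {2}/qmap.
case: labelP => [q q01 -> _ _ | u n u01 -> _ /(jump_not_CR _ _ u01) [] | off_site _ qmap_x].
  by exists q.
by move/(off_site_not_CR _ (off_site 0%R isT) qmap_x).
Qed.

Theorem theorem3p1 :
  exists f : R -> R, self_map01 f /\ chain_components_iso_Q01 f.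
Proof.
exists qmap; split; first by move=> x _; apply: site_in01.
exists label; split; [|split; [|split]].
- by move=> x /CR_qmapP [q /andP [q_ge0 q_le1] ->]; rewrite label_site ?q_ge0.
- move=> x y /CR_qmapP [a a01 ->] /CR_qmapP [b b01 ->].
  rewrite /chainE !chain_rel_site // !label_site //.
  by split=> [[le_ba le_ab] | ->]; [apply/eqP; rewrite eq_le le_ab | rewrite lexx].
- move=> q q_ge0 q_le1; have q01 : (0 <= q <= 1)%R by rewrite q_ge0.
  by exists (site q); split; [apply/CR_qmapP; exists q | apply: label_site].
- move=> x y /CR_qmapP [a a01 ->] /CR_qmapP [b b01 ->].
  by rewrite !label_site //; apply: chain_rel_site.
Qed.
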